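(* Let $n \geq 1$ and $i \in \mathbb{Z}_{\geq 2}$. Then $\dim_{\mathbb{F}_2} \mathrm{Gov}(V_{[n]}, i) = (i-1)\binom{n}{i}$.
   Context: $V_{[n]} = \mathbb{F}_2^n$ with standard basis $e_1,\dots,e_n$ and dual basis $\chi_1,\dots,\chi_n$ ($\chi_s(e_{s'}) = \delta_{s,s'}$). $\mathrm{Multi}(V_{[n]}, i)$ is the space of multilinear maps $V_{[n]}^i \to \mathbb{F}_2$, and $\chi_{h_1}\otimes\cdots\otimes\chi_{h_i}$ denotes $(\sigma_1,\dots,\sigma_i)\mapsto \prod_s \chi_{h_s}(\sigma_s)$. For $A \subseteq [n]$ with $\#A = i \geq 2$ and $x \in A$, the governing tensor is $\phi_{(A,x)} = \sum_{\tau} \chi_{\tau(1)}\otimes\cdots\otimes\chi_{\tau(i)}$, the sum over bijections $\tau: \{1,\dots,i\} \to A$ with $\tau(i-1) = x$ or $\tau(i) = x$. $\mathrm{Gov}(V_{[n]}, i)$ is the span of all $\phi_{(A,x)}$ with $A \subseteq [n]$, $\#A = i$, $x \in A$. *)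

From HB Require Import structures.
From mathcomp Require Import all_boot all_order all_algebra.
Set Implicit Arguments. Unset Strict Implicit. Unset Printing Implicit Defensive.
Import GRing.Theory.
Definition F2 : finFieldType := 'F_2.
Local Open Scope ring_scope.

(* V_[n] = F_2^n, as row vectors; coordinates 'I_n = {0,..,n-1} (0-indexed). *)
Notation V n := 'rV[F2]_n.

(* The ambient space of all maps V_[n]^i -> F_2 (i-tuples of vectors as finite
   functions 'I_i -> V n).  Multi(V_[n], i) is a subspace of it; Gov is spanned
   inside it. *)
Definition Maps (n i : nat) := {ffun {ffun 'I_i -> V n} -> F2^o}.

Definition chi (n : nat) (s : 'I_n) (v : V n) : F2 := v 0 s.

Definition multilinear (n i : nat) (f : Maps n i) : Prop :=
  forall (s : 'I_i) (sigma : {ffun 'I_i -> V n}) (a : F2) (u w : V n),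
    f [ffun t => if t == s then a *: u + w else sigma t]
    = a * f [ffun t => if t == s then u else sigma t]
      + f [ffun t => if t == s then w else sigma t].

Definition tensor (n i : nat) (h : {ffun 'I_i -> 'I_n}) : Maps n i :=
  [ffun sigma : {ffun 'I_i -> V n} => \prod_(s < i) chi (h s) (sigma s)].

(* Bijections tau : {1..i} -> A, i.e. injective maps 'I_i -> 'I_n with image A;
   with 0-indexing, positions i-1 and i become (i-2) and (i-1). *)
Definition governing_index (n i : nat) (A : {set 'I_n}) (x : 'I_n)
    (tau : {ffun 'I_i -> 'I_n}) : bool :=
  [&& injectiveb tau, [set tau j | j : 'I_i] == A &
      [exists j : 'I_i,
         ((nat_of_ord j == (i - 2)%N) || (nat_of_ord j == (i - 1)%N)) && (tau j == x)]].

Definition phi (n i : nat) (A : {set 'I_n}) (x : 'I_n) : Maps n i :=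
  \sum_(tau : {ffun 'I_i -> 'I_n} | @governing_index n i A x tau) tensor tau.

Definition Gov (n i : nat) : {vspace Maps n i} :=
  <<[seq @phi n i p.1 p.2 |
      p <- enum [pred p : {set 'I_n} * 'I_n | (#|p.1| == i) && (p.2 \in p.1)]]>>%VS.

(* For an i-set A, every bijection tau : {1..i} -> A contributes its tensor to
   phi_(A,x) for exactly two values of x, namely tau(i-1) and tau(i).  Over F_2
   the phi_(A,x) with x in A therefore sum to zero, so Gov is already spanned by
   the phi_(A,x) with x different from one distinguished element x0 of A (the
   one chosen by [pick]); there are (i-1) C(n,i) of them.  They are linearly
   independent: evaluated at the tuple of standard basis vectors
   (e_tau(1), ..., e_tau(i)) of a bijection tau onto A ending with x0, x, the
   map phi_(C,y) is 1 if (C,y) = (A,x) and 0 otherwise. *)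

From HB Require Import structures.
From mathcomp Require Import all_boot all_order all_algebra.
From mathcomp Require Import zify.
Set Implicit Arguments. Unset Strict Implicit. Unset Printing Implicit Defensive.
Import GRing.Theory.
Local Open Scope ring_scope.

Lemma free_map_dual (K : fieldType) (D : finType) (I : eqType)
    (F : I -> {ffun D -> K^o}) (p : I -> D) (s : seq I) :
  uniq s -> {in s &, forall a b, F a (p b) = (a == b)%:R} -> free (map F s).
Proof.
elim: s => [_ _|a s IHs /= /andP[a_s us] dual]; first exact: nil_free.
have dual_s : {in s &, forall b c, F b (p c) = (b == c)%:R}.
  by move=> b c bs cs; apply: dual; rewrite inE ?bs ?cs orbT.
rewrite free_cons IHs // andbT; apply/negP.
move=> /(@coord_span _ _ _ (in_tuple _)) Fa_span.
have := dual a a; rewrite mem_head eqxx => /(_ isT isT).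
rewrite Fa_span sum_ffunE big1 => [/esym/eqP|j _]; first by rewrite oner_eq0.
have js : (j < size s)%N by rewrite -(size_map F).
have sj_a : nth a s j != a by apply: contraNneq a_s => <-; rewrite mem_nth.
rewrite ffunE (nth_map a) // dual ?inE ?mem_nth ?eqxx ?orbT //.
by rewrite (negPf sj_a) scaler0.
Qed.

Section Unpicked.
Variable T : finType.

Definition unpicked (A : {set T}) : {set T} := [set x in A | Some x != [pick y in A]].

Lemma card_unpicked (A : {set T}) : #|unpicked A| = (#|A| - 1)%N.
Proof.
rewrite /unpicked; case: pickP => [x0 x0A | A0].
  rewrite (cardsD1 x0 A) x0A add1n subSS subn0; apply: eq_card => x.
  by rewrite !inE (inj_eq Some_inj) andbC.
rewrite (eq_card0 A0); apply: eq_card0 => x; rewrite inE.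
by have := A0 x; rewrite unfold_in => ->.
Qed.

Definition unpicked_pairs (i : nat) : {set {set T} * T} :=
  [set p : {set T} * T | (#|p.1| == i) && (p.2 \in unpicked p.1)].

Lemma card_unpicked_pairs (i : nat) :
  #|unpicked_pairs i| = ((i - 1) * 'C(#|T|, i))%N.
Proof.
have -> : #|unpicked_pairs i| = (\sum_(A : {set T} | #|A| == i) #|unpicked A|)%N.
  under [RHS]eq_bigr do rewrite -sum1_card.
  by rewrite pair_big_dep /= sum1dep_card; apply: eq_card => p; rewrite inE.
rewrite (eq_bigr (fun _ => (i - 1)%N)) => [|A /eqP <-]; last exact: card_unpicked.
rewrite sum_nat_const -card_draws mulnC; congr (_ * _)%N.
by apply: eq_card => A; rewrite inE.
Qed.

End Unpicked.

Section Governing.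
Variable n : nat.

Definition delta_tuple i (g : {ffun 'I_i -> 'I_n}) : {ffun 'I_i -> V n} :=
  [ffun s => delta_mx 0 (g s)].

Lemma tensor_delta_tuple i (h g : {ffun 'I_i -> 'I_n}) :
  tensor h (delta_tuple g) = (h == g)%:R.
Proof.
rewrite ffunE; case: eqVneq => [->|hg].
  by rewrite big1 // => s _; rewrite /chi ffunE mxE !eqxx.
have [s hgs] : exists s, h s != g s.
  apply/existsP; rewrite -negb_forall; apply: contraNN hg => /forallP hg.
  by apply/eqP/ffunP => s; apply/eqP.
by rewrite (bigD1 s) //= /chi ffunE mxE eqxx (negPf hgs) mul0r.
Qed.

Lemma phi_delta_tuple i (A : {set 'I_n}) x g :
  phi i A x (delta_tuple g) = (governing_index A x g)%:R.
Proof.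
rewrite sum_ffunE; under eq_bigr do rewrite tensor_delta_tuple.
case: (boolP (governing_index A x g)) => [gov_g|ngov_g].
  by rewrite (bigD1 g) //= eqxx big1 ?addr0 // => tau /andP[_ /negPf->].
by rewrite big1 // => tau gov_tau; case: eqVneq gov_tau ngov_g => // -> ->.
Qed.

Lemma phi_notin i (A : {set 'I_n}) x : x \notin A -> phi i A x = 0.
Proof.
move=> xA; rewrite /phi big_pred0 // => tau; apply/negbTE.
apply: contra xA => /and3P[_ /eqP <- /existsP[j /andP[_ /eqP <-]]].
exact: imset_f.
Qed.

Section LastTwo.
Variable k : nat.

Lemma governing_indexE (A : {set 'I_n}) x (tau : {ffun 'I_k.+2 -> 'I_n}) :
  governing_index A x tau =
  [&& injectiveb tau, [set tau j | j : 'I_k.+2] == A &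
      x \in tau @: [set inord k; ord_max]].
Proof.
rewrite /governing_index !subSS !subn0; do 2!congr (_ && _).
apply/existsP/imsetP => [[j /andP[j_last /eqP <-]]|[j j_last ->]].
  by exists j => //; rewrite !inE -!val_eqE /= inordK.
by exists j; rewrite eqxx andbT; move: j_last; rewrite !inE -!val_eqE /= inordK.
Qed.

Lemma card_governing (A : {set 'I_n}) (tau : {ffun 'I_k.+2 -> 'I_n}) :
  #|[pred x | governing_index A x tau]| =
  (2 * (injectiveb tau && ([set tau j | j : 'I_k.+2] == A)))%N.
Proof.
case: (boolP (injectiveb tau && _)) => [/andP[inj_tau /eqP im_tau]|bad_tau].
  have -> : #|[pred x | governing_index A x tau]| =
            #|tau @: [set inord k; ord_max]|.
    by apply: eq_card => x; rewrite inE governing_indexE inj_tau im_tau eqxx.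
  rewrite card_imset ?cards2; last exact/injectiveP.
  by rewrite -val_eqE /= inordK ?ltn_eqF.
apply: eq_card0 => x; rewrite inE governing_indexE.
by case: (injectiveb tau) bad_tau => //= /negPf->.
Qed.

Lemma sum_phi_eq0 (A : {set 'I_n}) : \sum_(x : 'I_n) phi k.+2 A x = 0.
Proof.
rewrite /phi (exchange_big_dep xpredT) //=; apply: big1 => tau _.
rewrite (eq_bigl (mem [pred x | governing_index A x tau])) // sumr_const.
rewrite card_governing mulrnA -[tensor tau *+ 2]scaler_nat.
by rewrite [2%:R](_ : _ = 0 :> F2) ?scale0r ?mul0rn //; apply/eqP.
Qed.

Definition ending_with (A : {set 'I_n}) (a b : 'I_n) : {ffun 'I_k.+2 -> 'I_n} :=
  [ffun j : 'I_k.+2 => nth a (enum (A :\ a :\ b) ++ [:: a; b]) j].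

Lemma governing_index_ending_with (A C : {set 'I_n}) a b y :
    #|A| = k.+2 -> a \in A -> b \in A -> a != b ->
  governing_index C y (ending_with A a b) = (C == A) && (y \in [set a; b]).
Proof.
move=> cardA aA bA ab; pose s := enum (A :\ a :\ b) ++ [:: a; b].
have size_r : size (enum (A :\ a :\ b)) = k.
  rewrite -cardE; move: cardA; rewrite (cardsD1 a A) aA (cardsD1 b (A :\ a)).
  by rewrite !inE bA eq_sym ab /=; lia.
have size_s : size s = k.+2 by rewrite size_cat size_r addn2.
have uniq_s : uniq s.
  by rewrite cat_uniq enum_uniq /= !mem_enum !inE ab !eqxx.
have s_A : s =i A.
  move=> z; rewrite mem_cat mem_enum !inE.
  case: (eqVneq z a) => [->|za]; first by rewrite aA orbT.
  case: (eqVneq z b) => [->|zb]; first by rewrite bA !orbT.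
  by rewrite /= orbF.
have inj_g : injective (ending_with A a b).
  move=> j j'; rewrite !ffunE => /eqP; rewrite nth_uniq ?size_s // => /eqP.
  exact: val_inj.
have im_g : [set ending_with A a b j | j : 'I_k.+2] = A.
  apply/setP => z; rewrite -s_A; apply/imsetP/idP => [[j _ ->]|].
    by rewrite ffunE mem_nth ?size_s.
  case/(nthP a) => j; rewrite size_s => lt_j <-.
  by exists (Ordinal lt_j); rewrite ?ffunE.
rewrite governing_indexE im_g (introT (injectiveP _) inj_g) eq_sym /=.
rewrite imsetU1 imset_set1 !ffunE /= inordK // !nth_cat size_r.
by rewrite ltnn subnn ltnNge leqnSn subSnn.
Qed.

Lemma Gov_span_unpicked_pairs :
  Gov n k.+2 = <<[seq phi k.+2 p.1 p.2 | p <- enum (unpicked_pairs 'I_n k.+2)]>>%VS.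
Proof.
apply/eqP; rewrite eqEsubv; apply/andP; split; last first.
  apply: sub_span => f /mapP[p]; rewrite mem_enum inE => /andP[cardA xA] ->.
  by apply/mapP; exists p; rewrite // mem_enum inE cardA; case/setIdP: xA.
set basis := [seq _ | p <- _].
apply/span_subvP => f /mapP[[A x]]; rewrite mem_enum inE /=.
move=> /andP[/eqP cardA xA] ->.
have span_unpicked y : y \in unpicked A -> phi k.+2 A y \in <<basis>>%VS.
  move=> yA; apply/memv_span/mapP.
  by exists (A, y); rewrite // mem_enum inE cardA eqxx.
have [//|x_picked] := boolP (x \in unpicked A); first exact: span_unpicked.
have := sum_phi_eq0 A; rewrite (bigD1 x) //= => /eqP; rewrite addr_eq0 => /eqP ->.
rewrite memvN; apply: memv_suml => y yx.
have [yA|yA] := boolP (y \in A); last by rewrite phi_notin ?mem0v.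
apply: span_unpicked; rewrite inE yA /=; move: x_picked; rewrite inE xA negbK.
by move=> /eqP <-; rewrite (inj_eq Some_inj).
Qed.

Lemma free_phi_unpicked_pairs :
  free [seq phi k.+2 p.1 p.2 | p <- enum (unpicked_pairs 'I_n k.+2)].
Proof.
pose point (q : {set 'I_n} * 'I_n) :=
  delta_tuple (ending_with q.1 (odflt q.2 [pick z in q.1]) q.2).
apply: (free_map_dual (p := point)); first exact: enum_uniq.
move=> [C y] [A x]; rewrite !mem_enum !inE /=.
move=> /and3P[_ _ y_unpicked] /and3P[/eqP cardA xA x_unpicked].
have [x0 x0A pickA] : exists2 x0, x0 \in A & [pick z in A] = Some x0.
  by case: pickP => [x0|/(_ x)]; [exists x0|rewrite xA].
rewrite pickA (inj_eq Some_inj) eq_sym in x_unpicked.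
rewrite phi_delta_tuple /point pickA governing_index_ending_with //=.
rewrite xpair_eqE !inE; case: eqVneq => [CA|] //=; rewrite CA pickA in y_unpicked.
by rewrite (inj_eq Some_inj) in y_unpicked; rewrite (negPf y_unpicked).
Qed.

End LastTwo.
End Governing.

Theorem proposition2p1 (n i : nat) (hn : (1 <= n)%N) (hi : (2 <= i)%N) :
  \dim (Gov n i) = ((i - 1) * 'C(n, i))%N.
Proof.
case: i hi => [|[|k]] // _.
rewrite Gov_span_unpicked_pairs; have /eqP -> := free_phi_unpicked_pairs n k.
by rewrite size_map -cardE card_unpicked_pairs card_ord.
Qed.
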